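(* Let $\mathbf{x}=(\mathbf{x}_1,\mathbf{x}_2,\mathbf{x}_3)$ have i.i.d. Bernoulli$(0.5)$ coordinates, and let $\mathbf{y}$ be distributed as follows: if $\mathbf{x}_3=1$, $\mathbf{y}=\mathbf{x}_1$ with probability $0.9$ and $1-\mathbf{x}_1$ otherwise; if $\mathbf{x}_3=0$, $\mathbf{y}=\mathbf{x}_2$ with probability $0.9$ and $1-\mathbf{x}_2$ otherwise. Let $e_{\mathrm{encode}}(\mathbf{x})=\xi_1=[1,0,0]$ if $\mathbf{x}_3=1$ and $\xi_2=[0,1,0]$ otherwise. Then $e_{\mathrm{encode}}$ maximizes $\mathrm{EVAL\text{-}X}(q,e)$ over all reductive explanations $e$ (those with $|e(\mathbf{x})|\le 1$ for all $\mathbf{x}$, i.e. selecting at most one coordinate), and $e_{\mathrm{encode}}$ is encoding.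
   Context: $q$ is the joint distribution of $(\mathbf{y},\mathbf{x})$ just described. An explanation is a map $e$ from inputs to masks in $\{0,1\}^3$; $|e(\mathbf{x})|$ is the number of ones. $\mathbf{x}_{\mathbf{v}}$ denotes the values of the coordinates selected by $\mathbf{v}$; $\mathbf{x}_{e(\mathbf{x})}=(e(\mathbf{x}),\mathbf{x}_{e(\mathbf{x})})$ is written $(\mathbf{v},\mathbf{a})$; $\mathbf{E}_{\mathbf{v}}=\mathbb{1}[e(\mathbf{x})=\mathbf{v}]$. The EVAL-X score is $\mathrm{EVAL\text{-}X}(q,e)=\mathbb{E}_{(\mathbf{v},\mathbf{a})\sim q(\mathbf{x}_{e(\mathbf{x})})}\mathbb{E}_{\mathbf{y}\sim q(\mathbf{y}\mid \mathbf{x}_{e(\mathbf{x})}=(\mathbf{v},\mathbf{a}))}[\log q(\mathbf{y}\mid \mathbf{x}_{\mathbf{v}}=\mathbf{a})]$. $e$ is encoding if there is a set $\mathbf{S}$ of pairs with $q(\mathbf{x}_{e(\mathbf{x})}\in\mathbf{S})>0$ such that for every $(\mathbf{v},\mathbf{a})\in\mathbf{S}$, $\mathbf{y}$ is not conditionally independent of $\mathbf{E}_{\mathbf{v}}$ given $\mathbf{x}_{\mathbf{v}}=\mathbf{a}$. *)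

From HB Require Import structures.
From mathcomp Require Import all_boot all_order all_algebra.
From mathcomp Require Import reals exp.
Set Implicit Arguments. Unset Strict Implicit. Unset Printing Implicit Defensive.
Import Order.TTheory GRing.Theory Num.Theory.
Local Open Scope ring_scope.

(* Inputs x = (x_1,x_2,x_3) in {0,1}^3, coordinates indexed by 'I_3
   (x_1 = x 0, x_2 = x 1, x_3 = x 2). Masks are also in {0,1}^3. *)
Definition inp := {ffun 'I_3 -> bool}.
Definition xmask := {ffun 'I_3 -> bool}.

Definition c1 : 'I_3 := @Ordinal 3 0 isT.
Definition c2 : 'I_3 := @Ordinal 3 1 isT.
Definition c3 : 'I_3 := @Ordinal 3 2 isT.

Section Model.
Variable R : realType.

Definition qy (y : bool) (x : inp) : R :=
  let t := if x c3 then x c1 else x c2 in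
  if y == t then 9/10 else 1/10.

Definition qx (x : inp) : R := \prod_(i < 3) (1/2).

Definition qyx (y : bool) (x : inp) : R := qx x * qy y x.

(* x_v: the values of the coordinates selected by v, encoded as the
   vector which agrees with x on the support of v and is 0 elsewhere. *)
Definition restr (v : xmask) (x : inp) : inp := [ffun i => v i && x i].

Definition condV (y : bool) (v : xmask) (a : inp) : R :=
  (\sum_(x : inp | restr v x == a) qyx y x) /
  (\sum_(x : inp | restr v x == a) qx x).

Definition pE (e : inp -> xmask) (v : xmask) (a : inp) : R :=
  \sum_(x : inp | (e x == v) && (restr v x == a)) qx x.

Definition condE (e : inp -> xmask) (y : bool) (v : xmask) (a : inp) : R :=
  (\sum_(x : inp | (e x == v) && (restr v x == a)) qyx y x) / pE e v a.

Definition evalx (e : inp -> xmask) : R :=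
  \sum_(v : xmask) \sum_(a : inp)
     pE e v a * \sum_(y : bool) condE e y v a * ln (condV y v a).

Definition reductive (e : inp -> xmask) : Prop :=
  forall x, (#|[set i | e x i]| <= 1)%N.

(* Conditional independence of y and E_v = 1[e(x) = v] given x_v = a. *)
Definition cond_indep_E (e : inp -> xmask) (v : xmask) (a : inp) : Prop :=
  forall (y b : bool),
    (\sum_(x : inp | (restr v x == a) && ((e x == v) == b)) qyx y x) /
      (\sum_(x : inp | restr v x == a) qx x)
    = condV y v a *
      ((\sum_(x : inp | (restr v x == a) && ((e x == v) == b)) qx x) /
       (\sum_(x : inp | restr v x == a) qx x)).

Definition encoding (e : inp -> xmask) : Prop :=
  exists S : {set xmask * inp},
    0 < \sum_(x : inp | (e x, restr (e x) x) \in S) qx x /\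
    forall v a, (v, a) \in S -> ~ cond_indep_E e v a.

End Model.

Definition xi1 : xmask := [ffun i => i == c1].
Definition xi2 : xmask := [ffun i => i == c2].
Definition e_encode (x : inp) : xmask := if x c3 then xi1 else xi2.

(* EVAL-X is the q(x)-average of the pointwise score
   score x v = sum_y q(y | x) ln q(y | x_v), so it is maximised by choosing,
   for every x separately, the best mask with at most one coordinate.
   Revealing x_1 (resp. x_2) gives q(y | x_i) = 0.7 on y = x_i and 0.3
   otherwise; revealing x_3 or nothing gives 1/2.  When x_3 = 1 the mask
   xi_1 scores 0.9 ln 0.7 + 0.1 ln 0.3, which beats the swapped value
   (ln 0.3 < ln 0.7) and ln (1/2) (since 0.7^9 * 0.3 > 2^-10); symmetrically
   for xi_2 when x_3 = 0.  The explanation is encoding because, given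
   x_1 = a, the event e(x) = xi_1 (that is, x_3 = 1) raises q(y = a) from
   0.7 to 0.9. *)

From HB Require Import structures.
From mathcomp Require Import all_boot all_order all_algebra.
From mathcomp Require Import reals exp ring lra.
Set Implicit Arguments.
Unset Strict Implicit.
Unset Printing Implicit Defensive.
Import Order.TTheory GRing.Theory Num.Theory.
Local Open Scope ring_scope.

Lemma sum_fibres (T U V : finType) (M : nmodType) (f : T -> U) (g : U -> T -> V)
    (F : T -> U -> V -> M) :
  \sum_u \sum_w \sum_(x | (f x == u) && (g u x == w)) F x u w
  = \sum_x F x (f x) (g (f x) x).
Proof.
under eq_bigr => u _ do under eq_bigr => w _ do rewrite big_mkcond.
under eq_bigr => u _ do rewrite exchange_big.
rewrite exchange_big; apply: eq_bigr => x _.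
rewrite (bigD1 (f x)) //= [X in _ + X]big1 => [|u /negPf fxu]; last first.
  by apply: big1 => w _; rewrite eq_sym fxu.
rewrite (bigD1 (g (f x) x)) //= !eqxx big1 ?addr0 // => w /negPf gw.
by rewrite eq_sym gw andbF.
Qed.

Lemma card_support_le1 (T : finType) (v : {ffun T -> bool}) :
  (#|[set i | v i]| <= 1)%N -> v = [ffun => false] \/ exists k, v = [ffun j => j == k].
Proof.
rewrite leq_eqVlt ltnS leqn0 => /orP[/cards1P[k /setP vk] | /eqP/cards0_eq/setP v0].
  by right; exists k; apply/ffunP => j; move: (vk j); rewrite !inE ffunE.
by left; apply/ffunP => j; move: (v0 j); rewrite !inE ffunE.
Qed.

Lemma ln_half_bound (R : realType) : 10 * ln (1/2 : R) <= 9 * ln (7/10) + ln (3/10).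
Proof.
have lnX (n : nat) (x : R) : 0 < x -> n%:R * ln x = ln (x ^+ n).
  by move=> x_gt0; rewrite lnXn // mulr_natl.
have [h_gt0 s_gt0 t_gt0] : [/\ 0 < 1/2 :> R, 0 < 7/10 :> R & 0 < 3/10 :> R].
  by split; lra.
rewrite (lnX 10%N) // (lnX 9%N) // -lnM ?posrE ?exprn_gt0 //.
rewrite ler_ln ?posrE ?exprn_gt0 //; last by rewrite mulr_gt0 ?exprn_gt0.
by rewrite !exprS expr0; lra.
Qed.

Definition mkinp (b1 b2 b3 : bool) : inp :=
  [ffun i : 'I_3 => if val i == 0%N then b1 else if val i == 1%N then b2 else b3].

Lemma mkinp_c1 b1 b2 b3 : mkinp b1 b2 b3 c1 = b1. Proof. by rewrite ffunE. Qed.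
Lemma mkinp_c2 b1 b2 b3 : mkinp b1 b2 b3 c2 = b2. Proof. by rewrite ffunE. Qed.
Lemma mkinp_c3 b1 b2 b3 : mkinp b1 b2 b3 c3 = b3. Proof. by rewrite ffunE. Qed.

Lemma sum_inp (M : nmodType) (P : pred inp) (F : inp -> M) :
  \sum_(x | P x) F x = \sum_(b1 : bool) \sum_(b2 : bool) \sum_(b3 : bool)
     (if P (mkinp b1 b2 b3) then F (mkinp b1 b2 b3) else 0).
Proof.
rewrite big_mkcond (reindex (fun b => mkinp b.1.1 b.1.2 b.2)) /=.
  by rewrite pair_big /= pair_big.
exists (fun x : inp => (x c1, x c2, x c3)) => [[[b1 b2] b3] _ | x _] /=.
  by rewrite mkinp_c1 mkinp_c2 mkinp_c3.
by apply/ffunP => -[[|[|[|//]]] i3]; rewrite ffunE /=; congr (x _); apply: val_inj.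
Qed.

Lemma ord3_cases (k : 'I_3) : [\/ k = c1, k = c2 | k = c3].
Proof.
by case: k => -[|[|[|//]]] k3; [apply: Or31 | apply: Or32 | apply: Or33];
  apply: val_inj.
Qed.

Definition unit_mask (k : 'I_3) : xmask := [ffun j => j == k].
Definition empty_mask : xmask := [ffun => false].

Lemma restr_unit_mask_eq k x x' :
  (restr (unit_mask k) x' == restr (unit_mask k) x) = (x' k == x k).
Proof.
apply/eqP/eqP => [/ffunP/(_ k) | xk]; first by rewrite !ffunE eqxx.
by apply/ffunP => j; rewrite !ffunE; case: eqP => // ->.
Qed.

Lemma restr_empty_maskE x : restr empty_mask x = [ffun => false].
Proof. by apply/ffunP => j; rewrite !ffunE. Qed.

Lemma card_unit_mask k : #|[set i | unit_mask k i]| = 1%N.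
Proof. by apply/eqP/cards1P; exists k; apply/setP => j; rewrite !inE ffunE. Qed.

Lemma e_encode_reductive : reductive e_encode.
Proof.
by move=> x; rewrite /e_encode; case: (x c3);
  [exact: eq_leq (card_unit_mask c1) | exact: eq_leq (card_unit_mask c2)].
Qed.

Section Model.
Variable R : realType.

Lemma qxE (x : inp) : qx R x = 1/8.
Proof. by rewrite /qx !big_ord_recr big_ord0 /=; field. Qed.

Lemma condV_unit_mask y k x : condV R y (unit_mask k) (restr (unit_mask k) x) =
  (\sum_(x' : inp | x' k == x k) qyx R y x') / \sum_(x' : inp | x' k == x k) qx R x'.
Proof.
by rewrite /condV; congr (_ / _); apply: eq_bigl => x'; rewrite restr_unit_mask_eq.
Qed.

Ltac expand_sums := rewrite ?sum_inp !big_bool /= /qyx /qy !qxE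
  ?mkinp_c1 ?mkinp_c2 ?mkinp_c3 /=.

Lemma condV_xi1 y x : condV R y xi1 (restr xi1 x) = if y == x c1 then 7/10 else 3/10.
Proof.
by rewrite (condV_unit_mask _ c1); expand_sums; case: y; case: (x c1) => /=; field.
Qed.

Lemma condV_xi2 y x : condV R y xi2 (restr xi2 x) = if y == x c2 then 7/10 else 3/10.
Proof.
by rewrite (condV_unit_mask _ c2); expand_sums; case: y; case: (x c2) => /=; field.
Qed.

Lemma condV_unit_mask_c3 y x : condV R y (unit_mask c3) (restr (unit_mask c3) x) = 1/2.
Proof.
by rewrite condV_unit_mask; expand_sums; case: y; case: (x c3) => /=; field.
Qed.

Lemma condV_empty_mask y x : condV R y empty_mask (restr empty_mask x) = 1/2.
Proof.
by rewrite /condV; expand_sums; rewrite !restr_empty_maskE eqxx; case: y => /=; field.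
Qed.

Lemma pE_mul_condE e y v a : pE R e v a * condE R e y v a =
  \sum_(x | (e x == v) && (restr v x == a)) qyx R y x.
Proof.
have [pE0 | pE_neq0] := eqVneq (pE R e v a) 0; last by rewrite mulrC divfK.
rewrite pE0 mul0r; apply/esym/big1 => x Px.
by rewrite /qyx (psumr_eq0P _ pE0) ?mul0r // => i _; rewrite qxE; lra.
Qed.

Definition score (x : inp) (v : xmask) : R :=
  \sum_y qy R y x * ln (condV R y v (restr v x)).

Lemma evalx_pointwise e : evalx R e = \sum_x qx R x * score x (e x).
Proof.
rewrite /evalx.
under eq_bigr => v _ do under eq_bigr => a _ do rewrite mulr_sumr.
under eq_bigr => v _ do under eq_bigr => a _ do
  under eq_bigr => y _ do rewrite mulrA pE_mul_condE mulr_suml.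
under eq_bigr => v _ do under eq_bigr => a _ do rewrite exchange_big.
rewrite (sum_fibres e restr (fun x v a => \sum_y qyx R y x * ln (condV R y v a))).
apply: eq_bigr => x _; rewrite /score mulr_sumr.
by apply: eq_bigr => y _; rewrite /qyx mulrA.
Qed.

Lemma score_le_encode x (v : xmask) :
  (#|[set i | v i]| <= 1)%N -> score x v <= score x (e_encode x).
Proof.
have ln_lt : ln (3/10 : R) < ln (7/10) by rewrite ltr_ln ?posrE; lra.
have ln_half := ln_half_bound R.
case/card_support_le1 => [-> | [k ->]]; last case: (ord3_cases k) => [||] ->;
rewrite /score /e_encode !big_bool; case x3 : (x c3) => /=;
rewrite ?condV_xi1 ?condV_xi2 ?condV_unit_mask_c3 ?condV_empty_mask /qy x3 /=;
case: (x c1); case: (x c2) => /=; lra.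
Qed.

Lemma evalx_le_encode e : reductive e -> evalx R e <= evalx R e_encode.
Proof.
move=> e_red; rewrite !evalx_pointwise; apply: ler_sum => x _.
by apply: ler_wpM2l; [rewrite qxE; lra | exact: score_le_encode].
Qed.

Lemma e_encode_eq_xi1 x : (e_encode x == xi1) = x c3.
Proof.
rewrite /e_encode; case: (x c3); rewrite ?eqxx //.
by apply/eqP => /ffunP/(_ c1); rewrite !ffunE.
Qed.

Lemma not_cond_indep_encode x : ~ cond_indep_E R e_encode xi1 (restr xi1 x).
Proof.
have fibre : \sum_(x' | restr xi1 x' == restr xi1 x) qx R x' = 1/2.
  rewrite -[restr xi1]/(restr (unit_mask c1)); expand_sums.
  by rewrite !restr_unit_mask_eq !mkinp_c1; case: (x c1) => /=; lra.
move=> /(_ (x c1) true); rewrite fibre condV_xi1 eqxx.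
rewrite -[restr xi1]/(restr (unit_mask c1)).
expand_sums; rewrite !restr_unit_mask_eq !e_encode_eq_xi1 !mkinp_c1 !mkinp_c3 /=.
by case: (x c1) => /=; lra.
Qed.

Lemma encoding_e_encode : encoding R e_encode.
Proof.
exists [set (xi1, restr xi1 x) | x : inp]; split.
  rewrite (bigD1 (mkinp true true true)) /=; last first.
    by rewrite /e_encode mkinp_c3 imset_f.
  rewrite qxE; apply: ltr_pwDl; first lra.
  by apply: sumr_ge0 => x _; rewrite qxE; lra.
by move=> v a /imsetP[x _ [-> ->]]; apply: not_cond_indep_encode.
Qed.

End Model.

Theorem lemma6 (R : realType) :
  reductive e_encode /\
  (forall e : inp -> xmask, reductive e -> evalx R e <= evalx R e_encode) /\
  encoding R e_encode.
Proof.
split; first exact: e_encode_reductive.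
by split; [exact: evalx_le_encode | exact: encoding_e_encode].
Qed.
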